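(* There is an absolute constant $K>0$ such that the following holds. Let $U \geqslant 2$ and $n\geqslant 2$ be integers. Let $A, B, X \subseteq [U]$ with $|A|=|B|=n$ and $X$ nonempty. Then there exists a set $M$ of integers with the following properties: - $|M| \leqslant 1 + \log_2 |X|$; - $M \subseteq [n^{1.5}, 8n^{1.5})$; - for every $x \in X$ there exists $m \in M$ with \[\#\{(a,b) \in A \times B : a+b \equiv x \pmod m \ \text{and}\ a+b \neq x\} \leqslant K\sqrt n\,(\log U)^3.\]
   Context: $[U] := \{0,1,\ldots,U-1\}$; $[x,y)$ for reals denotes the half-open real interval. *)

(* sets of integers as duplicate-free lists. *)
From Stdlib Require Import Reals ZArith List Lia Lra.
Import ListNotations.
Open Scope R_scope.

Definition bad_count (A B : list Z) (m x : Z) : nat :=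
  length (filter (fun p : Z * Z =>
            Z.eqb (Z.modulo (fst p + snd p - x) m) 0
            && negb (Z.eqb (fst p + snd p) x))%bool
          (list_prod A B)).

(* s is a subset of [U] = {0,...,U-1} *)
Definition subset_range (U : Z) (s : list Z) : Prop :=
  forall a, In a s -> (0 <= a < U)%Z.

From Stdlib Require Import Reals ZArith List Lia Lra.
From mathcomp Require Import all_boot zify ssrZ.

Set Implicit Arguments.
Unset Strict Implicit.
Unset Printing Implicit Defensive.

(* Fix a prime modulus p.  A pair (a, b) with a + b <> x is bad for p exactly when p divides
   the nonzero integer a + b - x, which lies in (-2U, 2U) and so has at most log2 (2U) prime
   divisors.  Hence, summed over a set P of primes, x has at most n^2 log2 (2U) bad pairs,
   and by Markov's inequality at least half of the primes of P have at most
   2 n^2 log2 (2U) / |P| bad pairs for x.  Taking for P the primes of (y, 4y] with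
   y ~ n^(3/2), of which there are >> y / log y by a weak Chebyshev bound (Erdos' estimates
   of central binomial coefficients), this is O(sqrt n log^2 U).  A greedy choice of primes,
   each good for half of the points of X not yet covered, then covers X with at most
   1 + log2 |X| primes. *)

Local Open Scope nat_scope.

(** * Primes in (N, 4N] *)

Lemma sum_leq_indicator t n : \sum_(1 <= k < n.+1) (k <= t) <= minn n t.
Proof.
elim: n => [|n IH]; first by rewrite big_geq.
by rewrite big_nat_recr //=; case: (leqP n.+1 t) => ?; lia.
Qed.

Lemma sum_divn_expn_widen p m : 1 < p ->
  \sum_(1 <= k < (m.*2).+1) m %/ p ^ k = \sum_(1 <= k < m.+1) m %/ p ^ k.
Proof.
move=> p_gt1; rewrite (big_cat_nat _ (n := m.+1)) //=; last lia.
rewrite [X in _ + X]big1_seq ?addn0 // => k /andP[_].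
rewrite mem_index_iota => /andP[k_gt_m _]; apply: divn_small.
by apply: leq_trans (ltn_expl m p_gt1) _; rewrite leq_exp2l //; lia.
Qed.

(* Legendre: each term [2m/p^k - 2(m/p^k)] of [logn p 'C(2m, m)] is 0 or 1, and it is 0
   once [p^k > 2m]. *)
Lemma pfactor_bin_mid_leq p m : prime p -> 0 < m -> p ^ logn p 'C(m.*2, m) <= m.*2.
Proof.
move=> p_pr m_gt0; have p_gt1 := prime_gt1 p_pr.
set t := trunc_log p m.*2.
suff : logn p 'C(m.*2, m) <= t.
  by move=> le_t; apply: leq_trans (trunc_logP p_gt1 _); [rewrite leq_exp2l | lia].
have bin_gt0 : 0 < 'C(m.*2, m) by rewrite bin_gt0; lia.
have fact_eq : 'C(m.*2, m) * (m`! * m`!) = (m.*2)`!.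
  by have := @bin_fact m.*2 m; rewrite -addnn addnK; apply; lia.
have := congr1 (logn p) fact_eq.
rewrite lognM ?muln_gt0 ?fact_gt0 // lognM ?fact_gt0 // !logn_fact //.
rewrite -(sum_divn_expn_widen m p_gt1) => logn_eq.
have term_leq : \sum_(1 <= k < (m.*2).+1) m.*2 %/ p ^ k <=
    \sum_(1 <= k < (m.*2).+1) ((m %/ p ^ k).*2 + (k <= t)).
  apply: leq_sum => k _; case: (leqP k t) => k_le.
    have pk_gt0 : 0 < p ^ k by rewrite expn_gt0; lia.
    have := ltn_ceil m pk_gt0.
    by rewrite addn1 => lt_m; rewrite -ltnS ltn_divLR //; lia.
  rewrite addn0 divn_small //; apply: leq_trans (trunc_log_ltn _ p_gt1) _.
  by rewrite leq_exp2l.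
rewrite big_split /= in term_leq.
have double_sum : \sum_(1 <= k < (m.*2).+1) (m %/ p ^ k).*2 =
    (\sum_(1 <= k < (m.*2).+1) m %/ p ^ k).*2.
  by rewrite -[RHS]muln2 big_distrl; apply: eq_bigr => k _; rewrite -muln2.
have := sum_leq_indicator t m.*2; rewrite double_sum in term_leq; lia.
Qed.

Lemma bin_odd_mid_leq m : 'C(m.*2.+1, m) <= 4 ^ m.
Proof.
have binS := expnDn 1 1 m.*2.+1.
rewrite (bigD1 (inord m)) //= (bigD1 (inord m.+1)) /= in binS; last first.
  by apply/eqP => /(congr1 val); rewrite /= !inordK; lia.
rewrite !inordK ?exp1n ?muln1 in binS; try lia.
have bin_sym : 'C(m.*2.+1, m.+1) = 'C(m.*2.+1, m).
  by rewrite -(bin_sub (n := m.*2.+1) (m := m)); [congr binomial; lia | lia].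
rewrite bin_sym in binS.
have : 2 * 'C(m.*2.+1, m) <= 2 ^ m.*2.+1 by rewrite binS; lia.
have -> : 4 ^ m = 2 ^ m.*2 by rewrite -[4]/(2 ^ 2) -expnM mul2n.
by rewrite expnS; lia.
Qed.

Lemma bin_mid_geq m : 4 ^ m <= m.*2.+1 * 'C(m.*2, m).
Proof.
elim: m => [|m IH]; first by rewrite bin0.
have bin_odd : m.+1 * 'C(m.*2.+1, m) = m.*2.+1 * 'C(m.*2, m).
  have /= -> := mul_bin_diag m.*2.+1 m.
  by rewrite -(bin_sub (n := m.*2.+1) (m := m.+1)); [congr (_ * binomial _ _) | ]; lia.
have bin_even : m.+1 * 'C(m.+1.*2, m.+1) = m.+1.*2 * 'C(m.*2.+1, m).
  by have /= <- := mul_bin_diag m.+1.*2 m; rewrite doubleS.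
have : 0 < 'C(m.*2, m) by rewrite bin_gt0; lia.
have : m.+1 * (4 * 4 ^ m) <= m.+1 * ((m.+1).*2.+1 * 'C(m.+1.*2, m.+1)) by nia.
by rewrite expnS leq_pmul2l.
Qed.

Definition primorial n := \prod_(0 <= p < n.+1 | prime p) p.

Lemma prime_coprime_fact p k : prime p -> k < p -> coprime p k`!.
Proof.
move=> p_pr; elim: k => [|k IH] lt_kp; first exact: coprimen1.
rewrite factS coprimeMr IH 1?andbT; last lia.
by rewrite prime_coprime // gtnNdvd.
Qed.

Lemma coprime_big_prod (r : seq nat) (P : pred nat) n :
  {in r, forall p, P p -> coprime p n} -> coprime (\prod_(p <- r | P p) p) n.
Proof.
move=> cop; rewrite big_seq_cond; elim/big_ind: _ => //.
- exact: coprime1n.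
- by move=> a b; rewrite coprimeMl => -> ->.
- by move=> p /andP[]; apply: cop.
Qed.

(* The primes of (m + 1, 2m + 1] divide (2m + 1)! but not m! (m + 1)!. *)
Lemma prod_primes_dvd_bin_odd_mid m :
  \prod_(m.+2 <= p < m.*2.+2 | prime p) p %| 'C(m.*2.+1, m).
Proof.
have fact_eq : 'C(m.*2.+1, m) * (m`! * m.+1`!) = (m.*2.+1)`!.
  have := @bin_fact m.*2.+1 m; rewrite (_ : m.*2.+1 - m = m.+1); last lia.
  by apply; lia.
have cop : coprime (\prod_(m.+2 <= p < m.*2.+2 | prime p) p) (m`! * m.+1`!).
  apply: coprime_big_prod => p; rewrite mem_index_iota => /andP[lt_p _] p_pr.
  by rewrite coprimeMr !prime_coprime_fact //; lia.
rewrite -(Gauss_dvdl _ cop) fact_eq (fact_split (m := m.+1)); last lia.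
by apply: dvdn_mull; rewrite [X in _ %| X](bigID prime) /= dvdn_mulr.
Qed.

(* Erdos' induction: an odd prime n = 2m + 1 splits primorial n as primorial (m + 1) times a
   divisor of 'C(2m + 1, m). *)
Lemma primorial_leq n : primorial n <= 4 ^ n.
Proof.
elim/ltn_ind: n => n IH; have [n_pr | n_npr] := boolP (prime n); last first.
  case: n IH n_npr => [|n] IH n_npr; first by rewrite /primorial big_mkcond big_nat1.
  rewrite /primorial big_mkcond big_nat_recr //= (negbTE n_npr) muln1 -big_mkcond.
  by apply: leq_trans (IH n (ltnSn n)) _; rewrite leq_exp2l.
have [-> | n_odd] := even_prime n_pr.
  by rewrite /primorial big_mkcond !big_nat_recr //= big_geq.
have := odd_double_half n; rewrite n_odd /=; set m := n./2 => n_eq.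
have m_gt0 : 0 < m by move: (prime_gt1 n_pr); lia.
have -> : primorial n = primorial m.+1 * \prod_(m.+2 <= p < m.*2.+2 | prime p) p.
  by rewrite /primorial -n_eq add1n (big_cat_nat _ (n := m.+2)) //=; lia.
have high_leq : \prod_(m.+2 <= p < m.*2.+2 | prime p) p <= 4 ^ m.
  apply: leq_trans (bin_odd_mid_leq m); apply: dvdn_leq.
    by rewrite bin_gt0; lia.
  exact: prod_primes_dvd_bin_odd_mid.
have low_leq : primorial m.+1 <= 4 ^ m.+1 by apply: IH; lia.
by apply: leq_trans (leq_mul low_leq high_leq) _; rewrite -expnD leq_exp2l //; lia.
Qed.

Definition primes_between a b := [seq p <- index_iota a.+1 b.+1 | prime p].

Lemma expn_leq_base p k a : 1 < p -> p ^ k <= a -> a < p * p -> p ^ k <= p.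
Proof.
move=> p_gt1 le_a lt_a; have : p ^ k < p ^ 2 by rewrite expnS expn1; lia.
by rewrite ltn_exp2l // => lt_k2; rewrite -{2}(expn1 p) leq_exp2l //; lia.
Qed.

(* Every prime power exactly dividing 'C(4N, 2N) is at most 4N; it is at most p when
   p^2 > 4N, and trivial when p > 4N. *)
Lemma bin_mid_leq_primes N r : 0 < N -> 4 * N < r.+1 * r.+1 ->
  'C(4 * N, 2 * N) <=
    (4 * N) ^ r.+1 * primorial N * (4 * N) ^ size (primes_between N (4 * N)).
Proof.
set a := 4 * N => N_gt0 lt_a; set c := 'C(a, 2 * N).
have c_gt0 : 0 < c by rewrite bin_gt0; lia.
have pfactor_leq p : prime p -> p ^ logn p c <= a.
  move=> p_pr; rewrite /c /a (_ : 4 * N = (2 * N).*2); last lia.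
  by apply: pfactor_bin_mid_leq => //; lia.
rewrite -{1}(partnT c_gt0) (@widen_partn (c + a) predT c); last lia.
rewrite (big_cat_nat _ (n := a.+1)) //=; last lia.
rewrite [X in _ * X]big1_seq ?muln1; last first.
  move=> p /andP[_]; rewrite mem_index_iota => /andP[lt_ap _].
  have [p_pr | p_npr] := boolP (prime p); last by rewrite /logn (negbTE p_npr).
  have : p ^ logn p c < p ^ 1 by rewrite expn1; apply: leq_ltn_trans (pfactor_leq p p_pr) _.
  by rewrite ltn_exp2l ?prime_gt1 // ltnS leqn0 => /eqP ->.
rewrite (big_cat_nat _ (n := N.+1)) //=; last lia.
apply: leq_mul.
- have small_leq : \prod_(0 <= p < N.+1 | p \in predT) p ^ logn p c <=
      \prod_(0 <= p < N.+1)
        ((if prime p && (p * p <= a) then a else 1) * (if prime p then p else 1)).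
    apply: leq_prod => p _.
    have [p_pr | p_npr] := boolP (prime p); last by rewrite /logn (negbTE p_npr).
    have p_gt1 := prime_gt1 p_pr; have [le_pp | lt_pp] /= := leqP (p * p) a.
      by apply: leq_trans (pfactor_leq p p_pr) _; rewrite leq_pmulr; lia.
    by rewrite mul1n; apply: expn_leq_base (pfactor_leq p p_pr) lt_pp.
  apply: (leq_trans small_leq); rewrite big_split /=; apply: leq_mul.
    rewrite -big_mkcond big_const_seq iter_muln_1 leq_pexp2l //; first lia.
    rewrite -size_filter -[r.+1](size_iota 0); apply: uniq_leq_size.
      by rewrite filter_uniq // iota_uniq.
    by move=> p; rewrite mem_filter mem_iota => /andP[/andP[_ le_pp] _]; nia.
  by rewrite /primorial [X in _ <= X]big_mkcond.
- apply: leq_trans (_ : \prod_(N.+1 <= p < a.+1) (if prime p then a else 1) <= _).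
    apply: leq_prod => p _.
    by have [p_pr | p_npr] := boolP (prime p); [exact: pfactor_leq | rewrite /logn (negbTE p_npr)].
  by rewrite -big_mkcond big_const_seq iter_muln_1 /primes_between size_filter.
Qed.

Lemma chebyshev_lower N r : 0 < N -> 4 * N < r.+1 * r.+1 ->
  4 ^ N <= (8 * N) ^ (r.+2 + size (primes_between N (4 * N))).
Proof.
move=> N_gt0 lt_r; set Q := size _.
have bin_geq := bin_mid_geq (2 * N); rewrite (_ : (2 * N).*2 = 4 * N) in bin_geq; last lia.
have bin_leq := bin_mid_leq_primes N_gt0 lt_r; rewrite -/Q in bin_leq.
have prim_leq := primorial_leq N.
have powers_leq : (4 * N).+1 * ((4 * N) ^ r.+1 * (4 * N) ^ Q) <= (8 * N) ^ (r.+2 + Q).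
  rewrite expnD (expnS _ r.+1) -mulnA leq_mul //; first lia.
  apply: leq_mul; first by rewrite leq_exp2r //; lia.
  by case: (Q) => [// | q]; rewrite leq_exp2r //; lia.
have : 4 ^ N * 4 ^ N <= 4 ^ N * (8 * N) ^ (r.+2 + Q).
  rewrite -expnD addnn -mul2n.
  apply: (leq_trans bin_geq); apply: leq_trans (leq_mul (leqnn _) bin_leq) _.
  have -> : (4 * N).+1 * ((4 * N) ^ r.+1 * primorial N * (4 * N) ^ Q) =
      primorial N * ((4 * N).+1 * ((4 * N) ^ r.+1 * (4 * N) ^ Q)) by nia.
  exact: leq_mul.
by rewrite leq_pmul2l // expn_gt0.
Qed.

Lemma has_prime_between N : 3 <= N <= 21 * 1000 -> 0 < size (primes_between N (4 * N)).
Proof.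
move=> /andP[N_ge3 N_le].
suff [p /andP[lt_Np le_p] p_pr] : exists2 p, N < p <= 4 * N & prime p.
  by rewrite size_filter -has_count; apply/hasP; exists p; rewrite // mem_index_iota; lia.
(* Each prime of the chain is below four times the previous one; numerals above 5000 are
   written as products, since [lia] cannot read large [nat] literals. *)
have [lt5 | ge5] := ltnP N 5; first by exists 5; [lia | by vm_compute].
have [lt19 | ge19] := ltnP N 19; first by exists 19; [lia | by vm_compute].
have [lt73 | ge73] := ltnP N 73; first by exists 73; [lia | by vm_compute].
have [lt283 | ge283] := ltnP N 283; first by exists 283; [lia | by vm_compute].
have [lt1129 | ge1129] := ltnP N 1129; first by exists 1129; [lia | by vm_compute].
have [lt4513 | ge4513] := ltnP N 4513; first by exists 4513; [lia | by vm_compute].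
have [lt10007 | ge10007] := ltnP N (10 * 1000 + 7).
  by exists (10 * 1000 + 7); [lia | vm_compute].
by exists (21 * 1000 + 1); [lia | vm_compute].
Qed.

(** * Averaging and greedy covering *)

Lemma count_sum (T : Type) (a : pred T) s : count a s = \sum_(x <- s) a x.
Proof. by rewrite -sum1_count big_mkcond. Qed.

Lemma sum_count_exchange (I J : Type) (R : I -> J -> bool) (r : seq I) (s : seq J) :
  \sum_(i <- r) count (R i) s = \sum_(j <- s) count (R^~ j) r.
Proof.
under eq_bigr do rewrite count_sum.
by rewrite exchange_big; apply: eq_bigr => j _; rewrite count_sum.
Qed.

Lemma sum_nat_const_seq (I : Type) (r : seq I) c : \sum_(i <- r) c = size r * c.
Proof. by rewrite big_const_seq iter_addn_0 count_predT mulnC. Qed.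

Lemma markov_count (I : Type) (r : seq I) (F : I -> nat) t :
  count (fun i => t < F i) r * t.+1 <= \sum_(i <- r) F i.
Proof. by elim: r => [|i r IH]; rewrite ?big_nil ?big_cons //=; case: ltnP => /=; lia. Qed.

Lemma count_below_twice_mean (I : Type) (r : seq I) (F : I -> nat) W :
  \sum_(i <- r) F i <= W -> size r <= 2 * count (fun i => size r * F i <= 2 * W) r.
Proof.
move=> sum_leq; have := markov_count r (fun i => size r * F i) (2 * W).
rewrite -big_distrr /=; set c := count _ r => markov.
have count_eq : count (fun i => size r * F i <= 2 * W) r + c = size r.
  rewrite -[RHS](count_predC (fun i => size r * F i <= 2 * W)); congr (_ + _).
  by rewrite /c; apply: eq_count => i; rewrite /= ltnNge.
have : size r * \sum_(i <- r) F i <= size r * W by rewrite leq_mul2l sum_leq orbT.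
nia.
Qed.

Section GreedyCover.

Variables (T S : eqType) (P : seq T) (X : seq S) (good : T -> S -> bool).
Hypothesis P_gt0 : 0 < size P.
Hypothesis good_half : {in X, forall x, size P <= 2 * count (good^~ x) P}.

Lemma exists_good_half Y : {subset Y <= X} ->
  exists2 p, p \in P & size Y <= 2 * count (good p) Y.
Proof.
move=> sub_YX; apply/hasP; apply/negPn/negP => /hasPn bad_all.
set goods := \sum_(p <- P) count (good p) Y.
have goods_lt : goods * 2 + size P * 1 <= size P * size Y.
  rewrite big_distrl /= -!sum_nat_const_seq -big_split /=.
  rewrite big_seq [X in _ <= X]big_seq; apply: leq_sum => p /bad_all.
  by rewrite -ltnNge addn1 mulnC.
have goods_ge : size Y * size P <= goods * 2.
  rewrite /goods sum_count_exchange big_distrl /= -sum_nat_const_seq.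
  by rewrite big_seq [X in _ <= X]big_seq; apply: leq_sum => y /sub_YX /good_half; rewrite mulnC.
lia.
Qed.

Lemma greedy_cover Y : {subset Y <= X} ->
  exists M, [/\ uniq M, {subset M <= P}, size M <= (trunc_log 2 (size Y)).+1
                & {in Y, forall y, has (good^~ y) M}].
Proof.
have [k le_Yk] : exists k, size Y <= k by exists (size Y).
elim: k Y le_Yk => [|k IH] Y le_Yk sub_YX; first by case: Y le_Yk sub_YX => // _ _; exists [::].
have [p p_in p_half] := exists_good_half sub_YX.
set Y' := [seq y <- Y | ~~ good p y].
have Y'_half : (size Y').*2 <= size Y.
  have := count_predC (good p) Y.
  by rewrite size_filter (@eq_count _ (predC (good p)) (fun y => ~~ good p y)) //; lia.
have covered y : y \in Y -> good p y \/ y \in Y'.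
  by rewrite /Y' mem_filter; case: (good p y); [left | right].
have [Y'_nil | Y'_neq0] := eqVneq Y' [::].
  exists [:: p]; split => //; first by move=> q; rewrite inE => /eqP ->.
  by move=> y /covered; rewrite Y'_nil /= orbF => -[].
have Y'_gt0 : 0 < size Y' by rewrite lt0n size_eq0.
have [||M' [uniq_M' sub_M' size_M' cover_M']] := IH Y'.
- lia.
- by move=> y; rewrite mem_filter => /andP[_ /sub_YX].
exists (undup (p :: M')); split.
- exact: undup_uniq.
- by move=> q; rewrite mem_undup inE => /orP[/eqP -> | /sub_M'].
- apply: leq_trans (size_undup _) _; rewrite /= ltnS (leq_trans size_M') //.
  apply: trunc_log_max => //; rewrite expnS mul2n; apply: leq_trans Y'_half.
  by rewrite leq_double trunc_logP.
- move=> y /covered [good_py | /cover_M' /hasP [q q_in good_qy]]; apply/hasP.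
    by exists p; rewrite // mem_undup mem_head.
  by exists q; rewrite // mem_undup inE q_in orbT.
Qed.

End GreedyCover.

(** * Bad pairs and prime moduli *)

Lemma InP (T : eqType) (x : T) (s : seq T) : reflect (In x s) (x \in s).
Proof.
elim: s => [|y s IH]; first by constructor.
rewrite in_cons; apply: (iffP orP) => [[/eqP -> | /IH x_in] | [-> | /IH ->]];
  by [left | right | rewrite eqxx | rewrite orbT].
Qed.

Lemma uniq_NoDup (T : eqType) (s : seq T) : uniq s -> NoDup s.
Proof.
elim: s => [|x s IH] /=; first by constructor.
by case/andP => /InP x_notin /IH; constructor.
Qed.

Lemma Zmod_eq0_dvdn (z : Z) p : 0 < p -> (z mod Z.of_nat p =? 0)%Z = (p %| Z.abs_nat z).
Proof.
move=> p_gt0; apply/Z.eqb_spec/dvdnP => [/Z.mod_divide | [k abs_eq]].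
- by case=> [|k ->]; [lia | exists (Z.abs_nat k); nia].
- apply/Z.mod_divide; [lia | apply/Z.divide_abs_r].
  by exists (Z.of_nat k); rewrite -Zabs2Nat.id_abs abs_eq; lia.
Qed.

Lemma expn2_size_primes_leq n : 0 < n -> 2 ^ size (primes n) <= n.
Proof.
move=> n_gt0; rewrite [X in _ <= X](prod_prime_decomp n_gt0) prime_decompE big_map /=.
have -> : 2 ^ size (primes n) = \prod_(p <- primes n) 2.
  by rewrite big_const_seq iter_muln_1 count_predT.
rewrite big_seq [X in _ <= X]big_seq.
apply: leq_prod => p p_in; have logn_gt0 : 0 < logn p n by rewrite logn_gt0.
have p_gt1 : 1 < p by apply: prime_gt1; move: p_in; rewrite mem_primes => /andP[].
by rewrite (leq_trans p_gt1) // -{1}(expn1 p) leq_pexp2l // ltnW.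
Qed.

Lemma expn2_count_prime_dvdn_leq (P : seq nat) d : uniq P -> all prime P -> 0 < d ->
  2 ^ count (dvdn^~ d) P <= d.
Proof.
move=> uniq_P /allP P_prime d_gt0; apply: leq_trans (expn2_size_primes_leq d_gt0).
rewrite leq_exp2l // -size_filter; apply: uniq_leq_size; first exact: filter_uniq.
by move=> p; rewrite mem_filter mem_primes d_gt0 => /andP[-> /P_prime ->].
Qed.

Definition bad_pair (m x : Z) (z : Z * Z) : bool :=
  ((z.1 + z.2 - x) mod m =? 0)%Z && ~~ (z.1 + z.2 =? x)%Z.

(* Stdlib's [length] and [List.filter] are convertible to [size] and [filter]. *)
Lemma bad_countE A B m x : bad_count A B m x = count (bad_pair m x) (list_prod A B).
Proof. exact: size_filter. Qed.

(* The moduli counted are prime divisors of the nonzero [|a + b - x| < 2U], and there are at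
   most [log2 (2U)] of those. *)
Lemma count_bad_moduli_leq (U x : Z) (P : seq nat) z :
  uniq P -> all prime P -> (0 <= z.1 < U)%Z -> (0 <= z.2 < U)%Z -> (0 <= x < U)%Z ->
  count (fun p => bad_pair (Z.of_nat p) x z) P <= trunc_log 2 (Z.to_nat U).*2.
Proof.
case: z => a b uniq_P P_prime /= a_range b_range x_range.
have [sum_eq | sum_neq] := Z.eq_dec (a + b) x.
  rewrite (eq_count (a2 := pred0)) ?count_pred0 // => p.
  by rewrite /bad_pair sum_eq Z.eqb_refl andbF.
set d := Z.abs_nat (a + b - x).
rewrite (eq_in_count (a2 := dvdn^~ d)); last first.
  move=> p /(allP P_prime) /prime_gt0 p_gt0.
  by rewrite /bad_pair /= Zmod_eq0_dvdn //; move/Z.eqb_neq: sum_neq => ->; rewrite andbT.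
apply: trunc_log_max => //; apply: leq_trans (expn2_count_prime_dvdn_leq uniq_P P_prime _) _; lia.
Qed.

Lemma sum_bad_count_leq (U x : Z) (A B : seq Z) (P : seq nat) :
  uniq P -> all prime P ->
  {in A, forall a, 0 <= a < U}%Z -> {in B, forall b, 0 <= b < U}%Z -> (0 <= x < U)%Z ->
  \sum_(p <- P) bad_count A B (Z.of_nat p) x <= size A * size B * trunc_log 2 (Z.to_nat U).*2.
Proof.
move=> uniq_P P_prime A_range B_range x_range.
under eq_bigr do rewrite bad_countE.
have -> : size A * size B = size (list_prod A B) by symmetry; apply: length_prod.
rewrite sum_count_exchange.
rewrite -sum_nat_const_seq big_seq [X in _ <= X]big_seq; apply: leq_sum => z.
move=> /InP; case: z => a b /in_prod_iff [/InP a_in /InP b_in].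
by apply: count_bad_moduli_leq; [| | apply: A_range | apply: B_range |].
Qed.

Lemma prime_moduli_cover (U : Z) (A B X : seq Z) (P : seq nat) :
  uniq P -> all prime P -> 0 < size P ->
  {in A, forall a, 0 <= a < U}%Z -> {in B, forall b, 0 <= b < U}%Z ->
  {in X, forall x, 0 <= x < U}%Z ->
  exists M : seq nat,
    [/\ uniq M, {subset M <= P}, size M <= (trunc_log 2 (size X)).+1 &
      {in X, forall x, exists2 m, m \in M & size P * bad_count A B (Z.of_nat m) x <=
                                             2 * (size A * size B * trunc_log 2 (Z.to_nat U).*2)}].
Proof.
move=> uniq_P P_prime P_gt0 A_range B_range X_range.
set good := fun p x => size P * bad_count A B (Z.of_nat p) x <=
  2 * (size A * size B * trunc_log 2 (Z.to_nat U).*2).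
have good_half : {in X, forall x, size P <= 2 * count (good^~ x) P}.
  move=> x /X_range x_range; apply: count_below_twice_mean.
  exact: sum_bad_count_leq.
have [M [uniq_M sub_MP size_M cover_M]] := greedy_cover P_gt0 good_half (fun x x_in => x_in).
exists M; split=> // x /cover_M /hasP [m m_in good_m]; by exists m.
Qed.

(** * Real estimates *)

Local Open Scope R_scope.

Lemma INR2 : INR 2 = 2.
Proof. by rewrite /=; lra. Qed.

Lemma INR4 : INR 4 = 4.
Proof. by rewrite /=; lra. Qed.

Lemma ln_le x y : 0 < x -> x <= y -> ln x <= ln y.
Proof.
move=> x_gt0 /Rle_lt_or_eq_dec [lt_xy | ->]; last exact: Rle_refl.
exact/Rlt_le/ln_increasing.
Qed.

Lemma ln_le_sub1 x : 0 < x -> ln x <= x - 1.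
Proof.
move=> x_gt0; rewrite -[X in _ <= X]ln_exp; apply: ln_le => //.
by have := exp_ineq1_le (x - 1); lra.
Qed.

Lemma ln_ge0 x : 1 <= x -> 0 <= ln x.
Proof. by move=> x_ge1; rewrite -ln_1; apply: ln_le; lra. Qed.

Lemma ln3_ge1 : 1 <= ln 3.
Proof. by rewrite -[X in X <= _]ln_exp; apply: ln_le; [apply: exp_pos | apply: exp_le_3]. Qed.

Lemma INR_expn a k : INR (a ^ k) = INR a ^ k.
Proof. by elim: k => [|k IH] //; rewrite expnS mult_INR IH. Qed.

Lemma ln_expn_le (a b k l : nat) : (0 < a)%nat -> (0 < b)%nat -> (a ^ k <= b ^ l)%nat ->
  INR k * ln (INR a) <= INR l * ln (INR b).
Proof.
move=> /ltP/lt_0_INR a_gt0 /ltP/lt_0_INR b_gt0 /leP/le_INR; rewrite !INR_expn.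
by rewrite -!ln_pow //; apply: ln_le; apply: pow_lt.
Qed.

Lemma ln2_le1 : ln 2 <= 1.
Proof. by rewrite -[X in _ <= X]ln_exp; apply: ln_le; [lra | have := exp_ineq1_le 1; lra]. Qed.

Lemma ln4_eq : ln 4 = 2 * ln 2.
Proof. have -> : 4 = 2 * 2 by lra. by rewrite ln_mult; lra. Qed.

Lemma ln8_eq : ln 8 = 3 * ln 2.
Proof. have -> : 8 = 2 * 4 by lra. by rewrite ln_mult ?ln4_eq; lra. Qed.

(* With [u = y^(1/4)]: [ln (8y) <= 3 + 4 (u - 1)] and [(2u^2 + 3) 4u <= 3u^4 / 4] once
   [u >= 12]. *)
Lemma sqrt_ln_le y : 21001 <= y -> (2 * sqrt y + 3) * ln (8 * y) <= 3 / 4 * y.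
Proof.
move=> y_ge; set u := sqrt (sqrt y); have u_ge0 : 0 <= u := sqrt_pos _.
have sqrt_y_eq : u * u = sqrt y by apply: sqrt_sqrt; apply: sqrt_pos.
have y_eq : y = (u * u) * (u * u) by rewrite sqrt_y_eq sqrt_sqrt //; lra.
have u_ge12 : 12 <= u.
  have sqrt_sq : sqrt y * sqrt y = y by apply: sqrt_sqrt; lra.
  have sqrt_ge : 144 <= sqrt y by have := sqrt_pos y; nra.
  by nra.
have ln_8y : ln (8 * y) = 3 * ln 2 + 4 * ln u.
  by rewrite ln_mult ?ln8_eq ?y_eq ?ln_mult; [ring | nra | nra | nra | nra | lra | nra].
have ln_8y_le : ln (8 * y) <= 4 * u.
  have ln_u : ln u <= u - 1 by apply: ln_le_sub1; lra.
  by have := ln2_le1; lra.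
have poly_le : (2 * (u * u) + 3) * (4 * u) <= 3 / 4 * ((u * u) * (u * u)) by nra.
rewrite -sqrt_y_eq {2}y_eq; apply: Rle_trans poly_le.
by apply: Rmult_le_compat_l; nra.
Qed.

Lemma IZR_le_INR (z : Z) n : (z <= Z.of_nat n)%Z -> IZR z <= INR n.
Proof. by rewrite INR_IZR_INZ; apply: IZR_le. Qed.

Lemma INR_le_IZR n (z : Z) : (Z.of_nat n <= z)%Z -> INR n <= IZR z.
Proof. by rewrite INR_IZR_INZ; apply: IZR_le. Qed.

Lemma primes_between_dense N : (3 <= N)%nat ->
  INR N <= 30000 * INR (size (primes_between N (4 * N))) * ln (INR N).
Proof.
move=> N_ge3; set Q := size _; set y := INR N.
have ln_y : 1 <= ln y by apply: Rle_trans ln3_ge1 (ln_le _ _); [lra | apply: IZR_le_INR; lia].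
have [N_le | N_gt] := leqP N (21 * 1000).
  have Q_gt0 : (0 < Q)%nat by apply: has_prime_between; lia.
  have Q_ge1 : 1 <= INR Q by apply: IZR_le_INR; lia.
  have : y <= 21000 by apply: INR_le_IZR; lia.
  by nra.
have y_ge : 21001 <= y by apply: IZR_le_INR; lia.
set r := Nat.sqrt (4 * N).
have [r_sq_le lt_r_sq] := Nat.sqrt_spec (4 * N) (Nat.le_0_l _).
have cheb : INR N * ln (INR 4) <= INR (r.+2 + Q) * ln (INR (8 * N)).
  by apply: ln_expn_le; [| | apply: chebyshev_lower]; lia.
have INR8 : INR 8 = 8 by rewrite /=; lra.
rewrite mult_INR INR4 INR8 -/y plus_INR !S_INR in cheb.
have r_le : INR r <= 2 * sqrt y.
  have sqrt_sq : sqrt y * sqrt y = y by apply: sqrt_sqrt; lra.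
  have : INR (r * r) <= INR (4 * N) by apply/le_INR/leP; lia.
  rewrite !mult_INR INR4 -/y => r_sq.
  by have := sqrt_pos y; have := pos_INR r; nra.
have ln4_ge1 : 1 <= ln 4 by rewrite ln4_eq; have := ln_lt_2; lra.
have ln_8y : ln (8 * y) <= 4 * ln y.
  by rewrite ln_mult ?ln8_eq; have := ln2_le1; lra.
have ln_8y_ge0 : 0 <= ln (8 * y) by apply: ln_ge0; lra.
have small_terms : (INR r + 1 + 1) * ln (8 * y) <= 3 / 4 * y.
  apply: Rle_trans (sqrt_ln_le y_ge); apply: Rmult_le_compat_r; lra.
have Q_term : INR Q * ln (8 * y) <= INR Q * (4 * ln y).
  by apply: Rmult_le_compat_l; [apply: pos_INR | lra].
have : y <= y * ln 4 by have := pos_INR N; nra.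
by nra.
Qed.

Lemma trunc_log2_ln k : (0 < k)%nat -> INR (trunc_log 2 k) * ln 2 <= ln (INR k).
Proof.
move=> k_gt0; have := @ln_expn_le 2 k (trunc_log 2 k) 1 isT k_gt0.
by rewrite expn1 trunc_logP // Rmult_1_l INR2; apply.
Qed.

Lemma trunc_log2_double_le_ln u : (2 <= u)%nat -> INR (trunc_log 2 (u.*2)) <= 4 * ln (INR u).
Proof.
move=> u_ge2; have u_ge : 2 <= INR u by apply: IZR_le_INR; lia.
have double_gt0 : (0 < u.*2)%nat by lia.
have := trunc_log2_ln double_gt0.
rewrite -mul2n mult_INR INR2 ln_mult; try lra.
have ln2_le : ln 2 <= ln (INR u) by apply: ln_le; lra.
by have := ln_lt_2; have := pos_INR (trunc_log 2 (2 * u)); nra.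
Qed.

Lemma Rpower_3_2 x : 0 < x -> Rpower x (3 / 2) = x * sqrt x.
Proof.
move=> x_gt0; rewrite (_ : 3 / 2 = 1 + / 2); last field.
by rewrite Rpower_plus Rpower_1 // Rpower_sqrt.
Qed.

Lemma exists_nat_between r : 0 <= r -> exists k : nat, r < INR k <= r + 1.
Proof.
move=> r_ge0; have [up_gt up_le] := archimed r.
have up_ge0 : (0 <= up r)%Z by apply: le_IZR; lra.
by exists (Z.to_nat (up r)); rewrite INR_IZR_INZ Z2Nat.id //; lra.
Qed.

(* [bad <= 2 n^2 D / Q <= 60000 n^2 D ln y / y <= 60000 sqrt n D ln y] *)
Lemma bad_count_bound (n U y Q bad D : R) :
  2 <= n <= U -> n * sqrt n <= y <= n * sqrt n + 1 -> 1 <= Q -> y <= 30000 * Q * ln y ->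
  Q * bad <= 2 * (n * n) * D -> 0 <= D <= 4 * ln U -> 0 <= bad ->
  bad <= 960000 * sqrt n * ln U ^ 3.
Proof.
move=> [n_ge2 n_le] [y_ge y_le] Q_ge1 y_le_Q Q_bad [D_ge0 D_le] bad_ge0.
set s := sqrt n in y_ge y_le *; have s_ge0 : 0 <= s := sqrt_pos n.
have s_sq : s * s = n by apply: sqrt_sqrt; lra.
have s_ge : 1.4 <= s by nra.
have ns_ge : 2 <= n * s by nra.
have ln_U : / 2 < ln U by apply: Rlt_le_trans ln_lt_2 (ln_le _ _); lra.
have ln_y_ge0 : 0 <= ln y by apply: ln_ge0; lra.
have ln_y_le : ln y <= 2 * ln U.
  have y_le_sq : y <= U * U by nra.
  by apply: Rle_trans (ln_le _ y_le_sq) _; [lra | rewrite ln_mult; lra].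
have bad_y : bad * y <= 60000 * (n * n) * D * ln y.
  have : bad * y <= (Q * bad) * (30000 * ln y).
    by rewrite (_ : Q * bad * _ = bad * (30000 * Q * ln y)); [apply: Rmult_le_compat_l | ring].
  have : Q * bad * (30000 * ln y) <= 2 * (n * n) * D * (30000 * ln y).
    by apply: Rmult_le_compat_r; lra.
  lra.
have bad_s : bad <= 60000 * s * D * ln y.
  have : bad * (n * s) <= bad * y by apply: Rmult_le_compat_l.
  rewrite -s_sq in bad_y *; have : 0 < s * s * s by nra.
  by nra.
have D_ln : D * ln y <= 4 * ln U * (2 * ln U) by apply: Rmult_le_compat.
have cube : ln U * ln U <= 2 * ln U ^ 3 by rewrite /=; nra.
have : s * (D * ln y) <= s * (16 * ln U ^ 3) by apply: Rmult_le_compat_l; lra.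
lra.
Qed.

Lemma cover_size_le_log2 k m : (0 < k)%nat -> (m <= (trunc_log 2 k).+1)%nat ->
  INR m <= 1 + ln (INR k) / ln 2.
Proof.
move=> k_gt0 /leP /le_INR; rewrite S_INR => m_le.
have log_le := trunc_log2_ln k_gt0; have ln2_gt := ln_lt_2.
have : INR (trunc_log 2 k) <= ln (INR k) / ln 2.
  apply: (Rmult_le_reg_r (ln 2)); first lra.
  by rewrite /Rdiv Rmult_assoc Rinv_l ?Rmult_1_r //; lra.
lra.
Qed.

Lemma length_le_of_range (U : Z) (A : list Z) : (0 <= U)%Z -> NoDup A -> subset_range U A ->
  (Z.of_nat (length A) <= U)%Z.
Proof.
move=> U_ge0 A_nodup A_range.
have : (length A <= length (map Z.of_nat (List.seq 0 (Z.to_nat U))))%coq_nat.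
  apply: NoDup_incl_length => // a /A_range a_range; apply/in_map_iff.
  by exists (Z.to_nat a); split; [lia | apply/in_seq; lia].
by rewrite length_map length_seq; lia.
Qed.

Lemma subset_range_mem U s : subset_range U s -> {in s, forall a, 0 <= a < U}%Z.
Proof. by move=> s_range a /InP /s_range. Qed.

Lemma mem_primes_between a b p : (p \in primes_between a b) = prime p && (a < p <= b)%nat.
Proof. by rewrite mem_filter mem_index_iota ltnS. Qed.

Lemma primes_between_scale (x : R) y p : 1 < x -> x < INR y <= x + 1 ->
  p \in primes_between y (4 * y) -> x <= INR p < 8 * x.
Proof.
move=> x_gt1 y_range; rewrite mem_primes_between => /and3P[_ lt_yp le_p].
have : INR y < INR p by apply/lt_INR/ltP.
have : INR p <= INR (4 * y) by apply/le_INR/leP.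
by rewrite mult_INR INR4; lra.
Qed.

Lemma primes_between_gt0 N : (3 <= N)%nat -> (0 < size (primes_between N (4 * N)))%nat.
Proof.
move=> N_ge3; have := primes_between_dense N_ge3; rewrite lt0n.
have : 0 < INR N by apply: lt_0_INR; apply/ltP; lia.
by move=> N_gt0 dense; apply/eqP => size_eq0; move: dense; rewrite size_eq0 /=; lra.
Qed.

Lemma bad_count_bound_nat (U n : Z) (sA sB y Q bad : nat) :
  (2 <= n <= U)%Z -> Z.of_nat sA = n -> Z.of_nat sB = n ->
  IZR n * sqrt (IZR n) <= INR y <= IZR n * sqrt (IZR n) + 1 ->
  INR y <= 30000 * INR Q * ln (INR y) -> (0 < Q)%nat ->
  (Q * bad <= 2 * (sA * sB * trunc_log 2 (Z.to_nat U).*2))%nat ->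
  INR bad <= 960000 * sqrt (IZR n) * ln (IZR U) ^ 3.
Proof.
move=> n_range sA_eq sB_eq y_range dense Q_gt0 /leP /le_INR Q_bad.
have U_eq : INR (Z.to_nat U) = IZR U by rewrite INR_IZR_INZ Z2Nat.id //; lia.
have U_ge2 : (2 <= Z.to_nat U)%nat by lia.
have D_le := trunc_log2_double_le_ln U_ge2; rewrite U_eq in D_le.
apply: (bad_count_bound (y := INR y) (Q := INR Q) (D := INR (trunc_log 2 (Z.to_nat U).*2))).
- by split; apply: IZR_le; lia.
- exact: y_range.
- by apply: IZR_le_INR; lia.
- exact: dense.
- rewrite !mult_INR INR2 (INR_IZR_INZ sA) (INR_IZR_INZ sB) sA_eq sB_eq in Q_bad; lra.
- by split; [apply: pos_INR | lra].
- exact: pos_INR.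
Qed.

Theorem mainTheorem8 :
  exists K : R, K > 0 /\
  forall (U n : Z) (A B X : list Z),
    (2 <= U)%Z -> (2 <= n)%Z ->
    NoDup A -> NoDup B -> NoDup X ->
    subset_range U A -> subset_range U B -> subset_range U X ->
    Z.of_nat (length A) = n -> Z.of_nat (length B) = n ->
    X <> nil ->
    exists M : list Z,
      NoDup M /\
      INR (length M) <= 1 + ln (INR (length X)) / ln 2 /\
      (forall m, In m M ->
         Rpower (IZR n) (3/2) <= IZR m /\ IZR m < 8 * Rpower (IZR n) (3/2)) /\
      (forall x, In x X -> exists m, In m M /\
         INR (bad_count A B m x) <= K * sqrt (IZR n) * (ln (IZR U)) ^ 3).
Proof.
exists 960000; split; first lra.
move=> U n A B X U_ge2 n_ge2 A_nodup _ _ A_range B_range X_range A_size B_size X_neq.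
have n_le_U : (n <= U)%Z by rewrite -A_size; apply: length_le_of_range => //; lia.
have n_ge2R : 2 <= IZR n by apply: IZR_le.
have scale_ge2 : 2 <= IZR n * sqrt (IZR n).
  have : 1 <= sqrt (IZR n) by rewrite -sqrt_1; apply: sqrt_le_1_alt; lra.
  nra.
rewrite Rpower_3_2; last lra; set t := IZR n * sqrt (IZR n) in scale_ge2 *.
have [y [y_gt y_le]] : exists y : nat, t < INR y <= t + 1 by apply: exists_nat_between; lra.
have y_ge3 : (3 <= y)%nat by apply/ltP/INR_lt; rewrite INR2; lra.
have [M [M_uniq M_sub M_size M_cover]] := prime_moduli_cover (P := primes_between y (4 * y))
  (filter_uniq _ (iota_uniq _ _)) (filter_all _ _) (primes_between_gt0 y_ge3)
  (subset_range_mem A_range) (subset_range_mem B_range) (subset_range_mem X_range).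
exists (map Z.of_nat M); split; [|split; [|split]].
- by apply: uniq_NoDup; rewrite map_inj_uniq //; apply: Nat2Z.inj.
- rewrite length_map; apply: cover_size_le_log2 M_size.
  by rewrite lt0n size_eq0; apply/eqP.
- move=> _ /in_map_iff [p [<- /InP /M_sub p_in]]; rewrite -INR_IZR_INZ.
  by apply: primes_between_scale p_in; lra.
- move=> x /InP /M_cover [p p_in bad_le]; exists (Z.of_nat p); split.
    by apply/in_map_iff; exists p; split => //; apply/InP.
  apply: (bad_count_bound_nat (y := y)) bad_le; [lia | exact: A_size | exact: B_size | | |].
  + by rewrite -/t; lra.
  + exact: primes_between_dense.
  + exact: primes_between_gt0.
Qed.
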